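(* Let $f:A\to B$ be a morphism in $\mathbf{Gpd}^{\mathbf{G}}$. The following are equivalent: (i) $f$ is a trivial cofibration for the projective model structure on $\mathbf{Gpd}^{\mathbf{G}}$; (ii) $f$ is a levelwise trivial cofibration (i.e. its underlying functor of groupoids is injective on objects and an equivalence of groupoids) and $f$ induces a bijection between the set of fixed points of $A$ and the set of fixed points of $B$; (iii) $f$ is a levelwise trivial cofibration and $f$ induces an isomorphism of groupoids $A^{\mathbf{G}}\cong B^{\mathbf{G}}$; (iv) $f$ is a levelwise trivial cofibration and $f$ induces an isomorphism of groupoids $A_{\mathbf{f}}\cong B_{\mathbf{f}}$.
   Context: $\mathbf{Gpd}$ is the category of (small) groupoids with its natural model structure: weak equivalences are equivalences of groupoids, fibrations are isofibrations, cofibrations are functors injective on objects. $\mathbf{G}$ denotes the one-object groupoid $\mathbf{B}(\mathbb{Z}/2\mathbb{Z})$, and $\mathbf{Gpd}^{\mathbf{G}}$ is the functor category $[\mathbf{B}(\mathbb{Z}/2\mathbb{Z})^{op},\mathbf{Gpd}]$, i.e. groupoids equipped with an involution and functors commuting with the involutions. The projective model structure on $\mathbf{Gpd}^{\mathbf{G}}$: a morphism is a weak equivalence (resp. fibration) iff its underlying functor of groupoids is an equivalence (resp. isofibration); cofibrations are the morphisms with the left lifting property against trivial fibrations. For a groupoid $A$ with involution $\alpha$, a fixed point is an object $x$ with $\alpha(x)=x$; $A_{\mathbf{f}}$ is the full subgroupoid of $A$ on the fixed points, and $A^{\mathbf{G}}$ is the subgroupoid consisting of fixed points and fixed morphisms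 (morphisms $h$ with $\alpha(h)=h$). *)

(** Small (strict) groupoids, presented by a type of objects and a type of
    arrows with source/target maps.  [comp g h] is "g after h", meaningful
    when [tgt h = src g]. *)
Record Gpd : Type := {
  ob : Type;
  ar : Type;
  src : ar -> ob;
  tgt : ar -> ob;
  idn : ob -> ar;
  comp : ar -> ar -> ar;
  inv : ar -> ar;
  src_idn : forall x, src (idn x) = x;
  tgt_idn : forall x, tgt (idn x) = x;
  src_comp : forall g h, tgt h = src g -> src (comp g h) = src h;
  tgt_comp : forall g h, tgt h = src g -> tgt (comp g h) = tgt g;
  comp_idr : forall f, comp f (idn (src f)) = f;
  comp_idl : forall f, comp (idn (tgt f)) f = f;
  comp_assoc : forall f g h, tgt h = src g -> tgt g = src f ->
     comp f (comp g h) = comp (comp f g) h;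
  src_inv : forall f, src (inv f) = tgt f;
  tgt_inv : forall f, tgt (inv f) = src f;
  comp_invl : forall f, comp (inv f) f = idn (src f);
  comp_invr : forall f, comp f (inv f) = idn (tgt f)
}.

Arguments src {_} _.
Arguments tgt {_} _.
Arguments idn {_} _.
Arguments comp {_} _ _.
Arguments inv {_} _.

Record Functor (A B : Gpd) : Type := {
  fo : ob A -> ob B;
  fa : ar A -> ar B;
  fa_src : forall h, src (fa h) = fo (src h);
  fa_tgt : forall h, tgt (fa h) = fo (tgt h);
  fa_idn : forall x, fa (idn x) = idn (fo x);
  fa_comp : forall g h, tgt h = src g -> fa (comp g h) = comp (fa g) (fa h)
}.

Arguments fo {A B} _ _.
Arguments fa {A B} _ _.

(** Objects of Gpd^G = [B(Z/2)^op, Gpd]: groupoids with a (strict) involution. *)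
Record GpdG : Type := {
  gpd :> Gpd;
  alpha : Functor gpd gpd;
  alpha_invol_o : forall x, fo alpha (fo alpha x) = x;
  alpha_invol_a : forall h, fa alpha (fa alpha h) = h
}.

Arguments alpha {_}.

Record GMor (A B : GpdG) : Type := {
  gfun :> Functor A B;
  gfun_o : forall x, fo gfun (fo alpha x) = fo alpha (fo gfun x);
  gfun_a : forall h, fa gfun (fa alpha h) = fa alpha (fa gfun h)
}.

Arguments gfun {A B} _.

Definition fully_faithful {A B : Gpd} (F : Functor A B) : Prop :=
  (forall h h' : ar A, src h = src h' -> tgt h = tgt h' ->
      fa F h = fa F h' -> h = h') /\
  (forall (x y : ob A) (g : ar B), src g = fo F x -> tgt g = fo F y ->
      exists h : ar A, src h = x /\ tgt h = y /\ fa F h = g).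

Definition ess_surj {A B : Gpd} (F : Functor A B) : Prop :=
  forall b : ob B, exists (a : ob A) (g : ar B), src g = fo F a /\ tgt g = b.

Definition is_equivalence {A B : Gpd} (F : Functor A B) : Prop :=
  fully_faithful F /\ ess_surj F.

Definition is_isofibration {A B : Gpd} (F : Functor A B) : Prop :=
  forall (a : ob A) (g : ar B), src g = fo F a ->
    exists h : ar A, src h = a /\ fa F h = g.

Definition inj_on_objects {A B : Gpd} (F : Functor A B) : Prop :=
  forall x y : ob A, fo F x = fo F y -> x = y.

Definition weq {A B : GpdG} (f : GMor A B) : Prop := is_equivalence (gfun f).
Definition fibration {A B : GpdG} (f : GMor A B) : Prop := is_isofibration (gfun f).
Definition trivial_fibration {A B : GpdG} (f : GMor A B) : Prop :=
  weq f /\ fibration f.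

(** Left lifting property of f against p, in Gpd^G (equalities of functors
    are pointwise on objects and arrows). *)
Definition llp {A B X Y : GpdG} (f : GMor A B) (p : GMor X Y) : Prop :=
  forall (u : GMor A X) (v : GMor B Y),
    (forall a, fo p (fo u a) = fo v (fo f a)) ->
    (forall h, fa p (fa u h) = fa v (fa f h)) ->
    exists l : GMor B X,
      (forall a, fo l (fo f a) = fo u a) /\
      (forall h, fa l (fa f h) = fa u h) /\
      (forall b, fo p (fo l b) = fo v b) /\
      (forall k, fa p (fa l k) = fa v k).

Definition cofibration {A B : GpdG} (f : GMor A B) : Prop :=
  forall (X Y : GpdG) (p : GMor X Y), trivial_fibration p -> llp f p.

Definition trivial_cofibration {A B : GpdG} (f : GMor A B) : Prop :=
  cofibration f /\ weq f.

Definition levelwise_trivial_cofibration {A B : GpdG} (f : GMor A B) : Prop :=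
  inj_on_objects (gfun f) /\ is_equivalence (gfun f).

Definition fixed_ob {A : GpdG} (x : ob A) : Prop := fo alpha x = x.
Definition fixed_ar {A : GpdG} (h : ar A) : Prop := fa alpha h = h.

Definition bij_fixed_points {A B : GpdG} (f : GMor A B) : Prop :=
  (forall x y : ob A, fixed_ob x -> fixed_ob y -> fo f x = fo f y -> x = y) /\
  (forall b : ob B, fixed_ob b -> exists a : ob A, fixed_ob a /\ fo f a = b).

(** f induces an isomorphism A^G ~= B^G (subgroupoid of fixed points and
    fixed arrows): the restricted functor is bijective on objects and arrows. *)
Definition iso_homotopy_fixed {A B : GpdG} (f : GMor A B) : Prop :=
  bij_fixed_points f /\
  (forall h h' : ar A, fixed_ar h -> fixed_ar h' -> fa f h = fa f h' -> h = h') /\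
  (forall k : ar B, fixed_ar k -> exists h : ar A, fixed_ar h /\ fa f h = k).

(** f induces an isomorphism A_f ~= B_f (full subgroupoid on fixed points). *)
Definition iso_full_fixed {A B : GpdG} (f : GMor A B) : Prop :=
  bij_fixed_points f /\
  (forall h h' : ar A, fixed_ob (src h) -> fixed_ob (tgt h) ->
      fixed_ob (src h') -> fixed_ob (tgt h') -> fa f h = fa f h' -> h = h') /\
  (forall k : ar B, fixed_ob (src k) -> fixed_ob (tgt k) ->
      exists h : ar A, fixed_ob (src h) /\ fixed_ob (tgt h) /\ fa f h = k).

From Stdlib Require Import ClassicalEpsilon FunctionalExtensionality PropExtensionality Bool.

(* A cofibration must be injective on objects and must hit every fixed point:
   lift against the maps of codiscrete Z/2-groupoids [ob A -> 1] and
   [ob B * bool -> ob B], where the involution of [ob B * bool] swaps the two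
   copies of a fixed point missed by [f], so that this map has no equivariant
   section over it.  Conversely, a trivial fibration [p] is surjective on
   objects and fully faithful.  Lifting objects is then a problem about
   Z/2-sets, solved orbit by orbit: fixed points of [B] come from [A], and a
   free orbit is lifted by choosing a representative.  Arrows then lift
   uniquely by full faithfulness.  Finally a levelwise trivial cofibration is
   faithful and injective on objects, so a bijection on fixed points upgrades
   to isomorphisms [A_f ~ B_f] and [A^G ~ B^G]. *)

Lemma involution_orbit_representative {T : Type} (s : T -> T) :
  (forall x, s (s x) = x) ->
  exists rep : T -> T, forall x, (rep x = x \/ rep x = s x) /\ rep (s x) = rep x.
Proof.
  intros s_invol.
  exists (fun x => epsilon (inhabits x) (fun y => y = x \/ y = s x)).
  intro x. split.
  - apply (epsilon_spec (inhabits x) (fun y => y = x \/ y = s x)). exists x. now left.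
  - assert (orbit_sx : (fun y => y = s x \/ y = s (s x)) = (fun y => y = x \/ y = s x)).
    { apply functional_extensionality. intro y. apply propositional_extensionality.
      rewrite s_invol. tauto. }
    rewrite orbit_sx. apply epsilon_inh_irrelevance. exists x. now left.
Qed.

Section EquivariantExtension.

Variables (A B X Y : Type) (sA : A -> A) (sB : B -> B) (sX : X -> X) (sY : Y -> Y).
Variables (i : A -> B) (pi : X -> Y) (u : A -> X) (v : B -> Y).

Hypothesis sB_invol : forall b, sB (sB b) = b.
Hypothesis sX_invol : forall x, sX (sX x) = x.
Hypothesis sY_invol : forall y, sY (sY y) = y.
Hypothesis i_inj : forall a a', i a = i a' -> a = a'.
Hypothesis i_equiv : forall a, i (sA a) = sB (i a).
Hypothesis fixed_in_image : forall b, sB b = b -> exists a, i a = b.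
Hypothesis pi_equiv : forall x, pi (sX x) = sY (pi x).
Hypothesis pi_surj : forall y, exists x, pi x = y.
Hypothesis u_equiv : forall a, u (sA a) = sX (u a).
Hypothesis v_equiv : forall b, v (sB b) = sY (v b).
Hypothesis square_commutes : forall a, pi (u a) = v (i a).

Lemma nonequivariant_extension :
  exists g : B -> X, forall b, (forall a, i a = b -> g b = u a) /\ pi (g b) = v b.
Proof.
  apply (choice (fun b x => (forall a, i a = b -> x = u a) /\ pi x = v b)).
  intro b.
  destruct (excluded_middle_informative (exists a, i a = b)) as [[a <-]|not_image].
  - exists (u a). split; [|apply square_commutes].
    intros a' E. now rewrite (i_inj _ _ E).
  - destruct (pi_surj (v b)) as [x Hx]. exists x. split; [|exact Hx].
    intros a E. now destruct not_image; exists a.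
Qed.

(* On the free orbit of [b] we keep [g] at the chosen representative and
   transport it by [sX] to the other point. *)
Lemma equivariant_extension :
  exists l : B -> X,
    (forall a, l (i a) = u a) /\ (forall b, pi (l b) = v b) /\
    (forall b, l (sB b) = sX (l b)).
Proof.
  destruct nonequivariant_extension as [g g_spec].
  destruct (involution_orbit_representative sB sB_invol) as [rep rep_spec].
  assert (g_image : forall a, g (i a) = u a) by (intro a; now apply g_spec).
  assert (u_fixed : forall a, sB (i a) = i a -> sX (u a) = u a).
  { intros a Ha. rewrite <- u_equiv. f_equal. apply i_inj. now rewrite i_equiv. }
  exists (fun b => if excluded_middle_informative (rep b = b) then g b else sX (g (sB b))).
  split; [|split].
  - intro a. destruct (excluded_middle_informative _); [apply g_image|].
    now rewrite <- i_equiv, g_image, u_equiv, sX_invol.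
  - intro b. destruct (excluded_middle_informative _); [apply g_spec|].
    now rewrite pi_equiv, (proj2 (g_spec _)), v_equiv, sY_invol.
  - intro b. destruct (rep_spec b) as [rep_cases rep_orbit]. rewrite rep_orbit.
    destruct (excluded_middle_informative (rep b = sB b)) as [rep_sb|not_sb];
    destruct (excluded_middle_informative (rep b = b)) as [rep_b|not_b].
    + assert (b_fixed : sB b = b) by congruence.
      destruct (fixed_in_image b b_fixed) as [a <-].
      rewrite b_fixed, g_image. symmetry. now apply u_fixed.
    + now rewrite sX_invol.
    + now rewrite sB_invol.
    + now destruct rep_cases.
Qed.

End EquivariantExtension.

Section FullyFaithfulLift.

Context {B X Y : Gpd}.
Variables (p : Functor X Y) (v : Functor B Y) (lo : ob B -> ob X).

Hypothesis p_ff : fully_faithful p.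
Hypothesis lo_over_v : forall b, fo p (lo b) = fo v b.

Definition lifts_arrow (k : ar B) (h : ar X) : Prop :=
  src h = lo (src k) /\ tgt h = lo (tgt k) /\ fa p h = fa v k.

Lemma lifts_arrow_unique (k : ar B) (h h' : ar X) :
  lifts_arrow k h -> lifts_arrow k h' -> h = h'.
Proof.
  intros [s1 [t1 p1]] [s2 [t2 p2]]. apply (proj1 p_ff); congruence.
Qed.

Lemma lifts_arrow_exists (k : ar B) : exists h, lifts_arrow k h.
Proof.
  apply (proj2 p_ff).
  - now rewrite lo_over_v, fa_src.
  - now rewrite lo_over_v, fa_tgt.
Qed.

Lemma fully_faithful_lift :
  exists F : Functor B X, (forall b, fo F b = lo b) /\ (forall k, lifts_arrow k (fa F k)).
Proof.
  destruct (choice lifts_arrow lifts_arrow_exists) as [la la_spec].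
  assert (la_idn : forall b, la (idn b) = idn (lo b)).
  { intro b. apply (lifts_arrow_unique (idn b)); [apply la_spec|].
    split; [|split].
    - now rewrite !src_idn.
    - now rewrite !tgt_idn.
    - now rewrite fa_idn, lo_over_v, fa_idn. }
  assert (la_comp : forall g h, tgt h = src g -> la (comp g h) = comp (la g) (la h)).
  { intros g h gh. destruct (la_spec g) as [sg [tg pg]]. destruct (la_spec h) as [sh [th ph]].
    assert (composable : tgt (la h) = src (la g)) by congruence.
    apply (lifts_arrow_unique (comp g h)); [apply la_spec|]. split; [|split].
    - now rewrite !src_comp.
    - now rewrite !tgt_comp.
    - now rewrite fa_comp, fa_comp, pg, ph. }
  exists (Build_Functor B X lo la (fun k => proj1 (la_spec k))
            (fun k => proj1 (proj2 (la_spec k))) la_idn la_comp).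
  split; [reflexivity|]. exact la_spec.
Qed.

End FullyFaithfulLift.

Lemma equivariant_fully_faithful_lift {B X Y : GpdG} (p : GMor X Y) (v : GMor B Y)
  (lo : ob B -> ob X) :
  fully_faithful p -> (forall b, fo p (lo b) = fo v b) ->
  (forall b, lo (fo alpha b) = fo alpha (lo b)) ->
  exists l : GMor B X, (forall b, fo l b = lo b) /\ (forall k, lifts_arrow p v lo k (fa l k)).
Proof.
  intros p_ff lo_over_v lo_equiv.
  destruct (fully_faithful_lift p v lo p_ff lo_over_v) as [F [F_ob F_ar]].
  assert (F_ob_equiv : forall b, fo F (fo alpha b) = fo alpha (fo F b)).
  { intro b. now rewrite !F_ob. }
  assert (F_ar_equiv : forall k, fa F (fa alpha k) = fa alpha (fa F k)).
  { intro k. destruct (F_ar k) as [sk [tk pk]].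
    apply (lifts_arrow_unique p v lo p_ff (fa alpha k)); [apply F_ar|].
    split; [|split].
    - now rewrite fa_src, sk, fa_src, lo_equiv.
    - now rewrite fa_tgt, tk, fa_tgt, lo_equiv.
    - now rewrite gfun_a, pk, gfun_a. }
  exists (Build_GMor B X F F_ob_equiv F_ar_equiv). split; [exact F_ob|exact F_ar].
Qed.

Lemma trivial_fibration_surjective_on_objects {X Y : GpdG} (p : GMor X Y) :
  trivial_fibration p -> forall y, exists x, fo p x = y.
Proof.
  intros [[_ p_ess] p_iso] y.
  destruct (p_ess y) as [x [g [g_src g_tgt]]].
  destruct (p_iso x g g_src) as [h [_ h_over_g]].
  exists (tgt h). now rewrite <- fa_tgt, h_over_g.
Qed.

Lemma cofibration_of_fixed_points_in_image {A B : GpdG} (f : GMor A B) :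
  inj_on_objects f -> (forall b, fixed_ob b -> exists a, fo f a = b) -> cofibration f.
Proof.
  intros f_inj f_fixed X Y p p_tfib u v square_ob square_ar.
  destruct (equivariant_extension (ob A) (ob B) (ob X) (ob Y)
              (fo alpha) (fo alpha) (fo alpha) (fo alpha) (fo f) (fo p) (fo u) (fo v)
              (alpha_invol_o B) (alpha_invol_o X) (alpha_invol_o Y) f_inj
              (gfun_o _ _ f) f_fixed (gfun_o _ _ p)
              (trivial_fibration_surjective_on_objects p p_tfib)
              (gfun_o _ _ u) (gfun_o _ _ v) square_ob)
    as [lo [lo_f [lo_p lo_equiv]]].
  destruct (equivariant_fully_faithful_lift p v lo (proj1 (proj1 p_tfib)) lo_p lo_equiv)
    as [l [l_ob l_ar]].
  exists l. split; [|split; [|split]].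
  - intro a. now rewrite l_ob.
  - intro h. apply (lifts_arrow_unique p v lo (proj1 (proj1 p_tfib)) (fa f h)).
    + apply l_ar.
    + split; [|split].
      * now rewrite !fa_src, lo_f.
      * now rewrite !fa_tgt, lo_f.
      * apply square_ar.
  - intro b. now rewrite l_ob.
  - intro k. apply l_ar.
Qed.

Definition codisc (S : Type) : Gpd.
Proof.
  refine (Build_Gpd S (S * S) fst snd (fun x => (x, x))
            (fun g h => (fst h, snd g)) (fun g => (snd g, fst g)) _ _ _ _ _ _ _ _ _ _ _);
    intros; repeat match goal with g : (_ * _)%type |- _ => destruct g end; reflexivity.
Defined.

Definition to_codisc {A : Gpd} {S : Type} (g : ob A -> S) : Functor A (codisc S).
Proof.
  refine (Build_Functor A (codisc S) g (fun h => (g (src h), g (tgt h))) _ _ _ _).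
  - reflexivity.
  - reflexivity.
  - intro x. simpl. now rewrite src_idn, tgt_idn.
  - intros k h kh. simpl. now rewrite src_comp, tgt_comp.
Defined.

Definition codiscG (S : Type) (s : S -> S) (s_invol : forall x, s (s x) = x) : GpdG.
Proof.
  refine (Build_GpdG (codisc S) (@to_codisc (codisc S) S s) s_invol _).
  intros [x y]. simpl. now rewrite !s_invol.
Defined.

Definition to_codiscG (A : GpdG) {S : Type} {s : S -> S} {s_invol : forall x, s (s x) = x}
  (g : ob A -> S) (g_equiv : forall x, g (fo alpha x) = s (g x)) : GMor A (codiscG S s s_invol).
Proof.
  refine (Build_GMor A (codiscG S s s_invol) (to_codisc g) g_equiv _).
  intro h. simpl. now rewrite fa_src, fa_tgt, !g_equiv.
Defined.

Lemma to_codiscG_trivial_fibration {S T : Type} {s : S -> S} {t : T -> T}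
  (s_invol : forall x, s (s x) = x) (t_invol : forall y, t (t y) = y)
  (pi : S -> T) (pi_equiv : forall x, pi (s x) = t (pi x)) :
  (forall y, exists x, pi x = y) ->
  trivial_fibration (to_codiscG (codiscG S s s_invol) (s_invol := t_invol) pi pi_equiv).
Proof.
  intros pi_surj. split; [split; [split|]|].
  - intros [x y] [x' y'] E E' _. simpl in E, E'. now subst.
  - intros x y [y1 y2] E E'. simpl in E, E'. subst. now exists (x, y).
  - intro y. destruct (pi_surj y) as [x <-]. now exists x, (pi x, pi x).
  - intros x [y1 y2] E. simpl in E. subst. destruct (pi_surj y2) as [x' <-]. now exists (x, x').
Qed.

Lemma cofibration_inj_on_objects {A B : GpdG} (f : GMor A B) :
  cofibration f -> inj_on_objects f.
Proof.
  intros f_cof x y fxy.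
  pose (u := to_codiscG A (s_invol := alpha_invol_o A) (fun a => a) (fun _ => eq_refl)).
  pose (p := to_codiscG (codiscG (ob A) _ (alpha_invol_o A)) (s := fun t : unit => t)
               (s_invol := fun _ => eq_refl) (fun _ => tt) (fun _ => eq_refl)).
  pose (v := to_codiscG B (s := fun t : unit => t) (s_invol := fun _ => eq_refl)
               (fun _ => tt) (fun _ => eq_refl)).
  assert (p_tfib : trivial_fibration p).
  { apply to_codiscG_trivial_fibration. intros []. now exists x. }
  destruct (f_cof _ _ p p_tfib u v (fun _ => eq_refl) (fun _ => eq_refl)) as [l [l_f _]].
  pose proof (f_equal (fo l) fxy) as lfxy. now rewrite !l_f in lfxy.
Qed.

Definition flip_at {T : Type} (s : T -> T) (t0 : T) (x : T * bool) : T * bool :=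
  (s (fst x), if excluded_middle_informative (fst x = t0) then negb (snd x) else snd x).

Lemma flip_at_involutive {T : Type} (s : T -> T) (t0 : T) :
  (forall t, s (s t) = t) -> s t0 = t0 -> forall x, flip_at s t0 (flip_at s t0 x) = x.
Proof.
  intros s_invol t0_fixed [t e]. unfold flip_at. simpl. rewrite s_invol.
  assert (s_t : s t = t0 <-> t = t0).
  { split; intro E; [rewrite <- (s_invol t), E|rewrite E]; exact t0_fixed. }
  destruct (excluded_middle_informative (t = t0)) as [t_t0|t_ne];
    destruct (excluded_middle_informative (s t = t0)) as [st|st_ne].
  - now rewrite negb_involutive.
  - tauto.
  - tauto.
  - reflexivity.
Qed.

Lemma cofibration_fixed_points_in_image {A B : GpdG} (f : GMor A B) :
  cofibration f -> forall b, fixed_ob b -> exists a, fo f a = b.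
Proof.
  intros f_cof b b_fixed. apply NNPP. intro b_missed.
  pose proof (flip_at_involutive _ b (alpha_invol_o B) b_fixed) as flip_invol.
  pose (X := codiscG (ob B * bool) (flip_at (fo alpha) b) flip_invol).
  pose (p := to_codiscG X (s_invol := alpha_invol_o B) fst (fun _ => eq_refl)).
  assert (p_tfib : trivial_fibration p).
  { apply to_codiscG_trivial_fibration. intro y. now exists (y, true). }
  assert (u_equiv : forall a, (fo f (fo alpha a), true) = flip_at (fo alpha) b (fo f a, true)).
  { intro a. unfold flip_at. simpl. rewrite gfun_o.
    destruct (excluded_middle_informative (fo f a = b)) as [hit|]; [|reflexivity].
    destruct b_missed. now exists a. }
  pose (u := to_codiscG A (s_invol := flip_invol) (fun a => (fo f a, true)) u_equiv).
  pose (v := to_codiscG B (s_invol := alpha_invol_o B) (fun b => b) (fun _ => eq_refl)).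
  assert (square_ar : forall h, fa p (fa u h) = fa v (fa f h)).
  { intro h. simpl. now rewrite fa_src, fa_tgt. }
  destruct (f_cof _ _ p p_tfib u v (fun _ => eq_refl) square_ar) as [l [_ [_ [l_p _]]]].
  pose proof (gfun_o _ _ l b) as l_equiv. pose proof (l_p b) as l_over_b.
  unfold fixed_ob in b_fixed. rewrite b_fixed in l_equiv.
  revert l_equiv l_over_b. destruct (fo l b) as [b' e]. simpl. intros l_equiv <-.
  unfold flip_at in l_equiv. simpl in l_equiv.
  destruct (excluded_middle_informative (b' = b')) as [_|]; [|contradiction].
  destruct e; discriminate (f_equal snd l_equiv).
Qed.

Lemma trivial_cofibration_iff_fixed_points {A B : GpdG} (f : GMor A B) :
  trivial_cofibration f <-> levelwise_trivial_cofibration f /\ bij_fixed_points f.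
Proof.
  split.
  - intros [f_cof f_weq]. pose proof (cofibration_inj_on_objects f f_cof) as f_inj.
    split; [split; assumption|split].
    + intros x y _ _. apply f_inj.
    + intros b b_fixed.
      destruct (cofibration_fixed_points_in_image f f_cof b b_fixed) as [a <-].
      exists a. split; [|reflexivity].
      apply f_inj. unfold fixed_ob in *. now rewrite gfun_o.
  - intros [[f_inj f_weq] [_ f_fixed]]. split; [|exact f_weq].
    apply cofibration_of_fixed_points_in_image; [exact f_inj|].
    intros b b_fixed. destruct (f_fixed b b_fixed) as [a [_ <-]]. now exists a.
Qed.

Lemma inj_on_arrows_of_faithful {A B : Gpd} (F : Functor A B) :
  inj_on_objects F -> fully_faithful F -> forall h h', fa F h = fa F h' -> h = h'.
Proof.
  intros F_inj [F_faithful _] h h' E. apply F_faithful; [| |exact E]; apply F_inj.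
  - now rewrite <- !fa_src, E.
  - now rewrite <- !fa_tgt, E.
Qed.

Lemma fixed_ar_ends {A : GpdG} (k : ar A) :
  fixed_ar k -> fixed_ob (src k) /\ fixed_ob (tgt k).
Proof.
  unfold fixed_ar, fixed_ob. intro k_fixed.
  now rewrite <- fa_src, <- fa_tgt, k_fixed.
Qed.

Section LevelwiseTrivialCofibration.

Context {A B : GpdG} (f : GMor A B).
Hypothesis f_lw : levelwise_trivial_cofibration f.
Hypothesis f_fixed : bij_fixed_points f.

Lemma full_fixed_arrow_surjective (k : ar B) :
  fixed_ob (src k) -> fixed_ob (tgt k) ->
  exists h, fixed_ob (src h) /\ fixed_ob (tgt h) /\ fa f h = k.
Proof.
  intros src_fixed tgt_fixed.
  destruct (proj2 f_fixed _ src_fixed) as [a [a_fixed fa_k]].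
  destruct (proj2 f_fixed _ tgt_fixed) as [a' [a'_fixed fa'_k]].
  destruct (proj2 (proj1 (proj2 f_lw)) a a' k (eq_sym fa_k) (eq_sym fa'_k))
    as [h [<- [<- fh]]].
  now exists h.
Qed.

Lemma iso_full_fixed_of_levelwise : iso_full_fixed f.
Proof.
  split; [exact f_fixed|split].
  - intros h h' _ _ _ _. apply (inj_on_arrows_of_faithful f); apply f_lw.
  - exact full_fixed_arrow_surjective.
Qed.

Lemma iso_homotopy_fixed_of_levelwise : iso_homotopy_fixed f.
Proof.
  split; [exact f_fixed|split].
  - intros h h' _ _. apply (inj_on_arrows_of_faithful f); apply f_lw.
  - intros k k_fixed. destruct (fixed_ar_ends k k_fixed) as [src_fixed tgt_fixed].
    destruct (full_fixed_arrow_surjective k src_fixed tgt_fixed) as [h [_ [_ fh]]].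
    exists h. split; [|exact fh].
    apply (inj_on_arrows_of_faithful f); [apply f_lw|apply f_lw|].
    now rewrite gfun_a, fh.
Qed.

End LevelwiseTrivialCofibration.

Theorem proposition4p5 (A B : GpdG) (f : GMor A B) :
  (trivial_cofibration f <->
     levelwise_trivial_cofibration f /\ bij_fixed_points f) /\
  (trivial_cofibration f <->
     levelwise_trivial_cofibration f /\ iso_homotopy_fixed f) /\
  (trivial_cofibration f <->
     levelwise_trivial_cofibration f /\ iso_full_fixed f).
Proof.
  pose proof (trivial_cofibration_iff_fixed_points f) as f_tc.
  split; [exact f_tc|split; split].
  - intro f_triv. destruct (proj1 f_tc f_triv) as [f_lw f_fixed].
    split; [exact f_lw|]. now apply iso_homotopy_fixed_of_levelwise.
  - intros [f_lw [f_fixed _]]. now apply f_tc.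
  - intro f_triv. destruct (proj1 f_tc f_triv) as [f_lw f_fixed].
    split; [exact f_lw|]. now apply iso_full_fixed_of_levelwise.
  - intros [f_lw [f_fixed _]]. now apply f_tc.
Qed.
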